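(* Let $X$ be a real Banach space and $T:X\rightrightarrows X^*$ a monotone operator whose domain $D_T$ is bounded. Consider the conditions: (i) for every $x\in X$ with $x\notin\overline{D_T}$, $\sup\left\{\frac{\langle z^*,x-z\rangle}{\|x-z\|} : (z,z^* )\in G(T)\right\}=\infty$; (ii) $\pi_1\,\mathrm{dom}\,\varphi_T\subset\overline{D_T}$; (iii) $\overline{D_T}=\overline{\mathrm{co}\,D_T}=\overline{\pi_1\,\mathrm{dom}\,\varphi_T}$; (iv) $\overline{D_T}$ is convex. Then (i), (ii), (iii) are equivalent, and each implies (iv). If moreover $T$ is maximal monotone, then all four conditions (i)–(iv) are equivalent.
   Context: $X$ is a real Banach space with topological dual $X^*$ and pairing $\langle x,x^*\rangle$. A (multivalued) operator $T:X\rightrightarrows X^*$ has graph $G(T)=\{(x,x^* ):x^*\in T(x)\}$, domain $D_T=\{x:T(x)\neq\emptyset\}$ and range $R_T=\bigcup_{x}T(x)$. $T$ is monotone if $\langle x^*-y^*,x-y\rangle\ge0$ for all $(x,x^* ),(y,y^* )\in G(T)$; it is maximal monotone if no monotone operator has a graph strictly containing $G(T)$. The Fitzpatrick function of a monotone $T$ is $\varphi_T(x,x^* )=\sup\{\langle x^*-z^*,z-x\rangle:(z,z^* )\in G(T)\}+\langle x^*,x\rangle$, $\mathrm{dom}\,\varphi_T=\{(x,x^* ):\varphi_T(x,x^* )<\infty\}$, and $\pi_1:X\times X^*\to X$, $\pi_2:X\times X^*\to X^*$ are the projections. $\mathrm{co}$ denotes convex hull and bars denote norm closure. *)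

From Stdlib Require Import Reals.
Open Scope R_scope.
Set Implicit Arguments.

Record Banach := {
  carrier :> Type;
  vzero : carrier;
  vadd : carrier -> carrier -> carrier;
  vopp : carrier -> carrier;
  vscal : R -> carrier -> carrier;
  vnorm : carrier -> R;
  vadd_assoc : forall x y z, vadd x (vadd y z) = vadd (vadd x y) z;
  vadd_comm : forall x y, vadd x y = vadd y x;
  vadd_0l : forall x, vadd vzero x = x;
  vadd_oppr : forall x, vadd x (vopp x) = vzero;
  vscal_1 : forall x, vscal 1 x = x;
  vscal_assoc : forall a b x, vscal a (vscal b x) = vscal (a * b) x;
  vscal_addr : forall a x y, vscal a (vadd x y) = vadd (vscal a x) (vscal a y);
  vscal_addl : forall a b x, vscal (a + b) x = vadd (vscal a x) (vscal b x);
  vnorm_ge0 : forall x, 0 <= vnorm x;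
  vnorm_eq0 : forall x, vnorm x = 0 -> x = vzero;
  vnorm_scal : forall a x, vnorm (vscal a x) = Rabs a * vnorm x;
  vnorm_triangle : forall x y, vnorm (vadd x y) <= vnorm x + vnorm y;
  vcomplete : forall u : nat -> carrier,
    (forall eps, 0 < eps -> exists N, forall m n, (N <= m)%nat -> (N <= n)%nat ->
        vnorm (vadd (u m) (vopp (u n))) < eps) ->
    exists l, forall eps, 0 < eps -> exists N, forall n, (N <= n)%nat ->
        vnorm (vadd (u n) (vopp l)) < eps
}.

Definition vsub {X : Banach} (x y : X) : X := vadd X x (vopp X y).

(* Topological dual: continuous (= bounded) linear functionals.
   The pairing <x, xs> is application  xs x. *)
Record dual (X : Banach) := {
  dfun :> X -> R;
  dfun_add : forall x y, dfun (vadd X x y) = dfun x + dfun y;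
  dfun_scal : forall a x, dfun (vscal X a x) = a * dfun x;
  dfun_bounded : exists C, forall x, Rabs (dfun x) <= C * vnorm X x
}.

(* A multivalued operator T : X ⇉ X^dual, identified with its graph G(T). *)
Definition operator (X : Banach) := X -> dual X -> Prop.

Definition monotone {X : Banach} (T : operator X) : Prop :=
  forall x xs y ys, T x xs -> T y ys ->
    0 <= xs (vsub x y) - ys (vsub x y).

Definition maximal_monotone {X : Banach} (T : operator X) : Prop :=
  monotone T /\
  forall S : operator X, monotone S -> (forall x xs, T x xs -> S x xs) ->
    forall x xs, S x xs -> T x xs.

Definition domain {X : Banach} (T : operator X) : X -> Prop :=
  fun x => exists xs, T x xs.

Definition bounded_set {X : Banach} (A : X -> Prop) : Prop :=
  exists M, forall x, A x -> vnorm X x <= M.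

Definition closure {X : Banach} (A : X -> Prop) : X -> Prop :=
  fun x => forall eps, 0 < eps -> exists y, A y /\ vnorm X (vsub x y) < eps.

Definition convex {X : Banach} (A : X -> Prop) : Prop :=
  forall x y t, A x -> A y -> 0 <= t <= 1 ->
    A (vadd X (vscal X t x) (vscal X (1 - t) y)).

Definition co {X : Banach} (A : X -> Prop) : X -> Prop :=
  fun x => forall C : X -> Prop, convex C -> (forall y, A y -> C y) -> C x.

(* (x,xs) ∈ dom φ_T, i.e. φ_T(x,xs) < +∞, where
   φ_T(x,xs) = sup{<xs-zs, z-x> : (z,zs) ∈ G(T)} + <xs,x>. *)
Definition dom_fitzpatrick {X : Banach} (T : operator X) (x : X) (xs : dual X) : Prop :=
  exists M, forall z zs, T z zs ->
    (xs (vsub z x) - zs (vsub z x)) + xs x <= M.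

Definition pi1_dom_fitzpatrick {X : Banach} (T : operator X) : X -> Prop :=
  fun x => exists xs, dom_fitzpatrick T x xs.

Definition set_eq {X : Banach} (A B : X -> Prop) : Prop := forall x, A x <-> B x.

Definition cond_i {X : Banach} (T : operator X) : Prop :=
  forall x, ~ closure (domain T) x ->
    forall M, exists z zs, T z zs /\ M < zs (vsub x z) / vnorm X (vsub x z).

Definition cond_ii {X : Banach} (T : operator X) : Prop :=
  forall x, pi1_dom_fitzpatrick T x -> closure (domain T) x.

Definition cond_iii {X : Banach} (T : operator X) : Prop :=
  set_eq (closure (domain T)) (closure (co (domain T))) /\
  set_eq (closure (domain T)) (closure (pi1_dom_fitzpatrick T)).

Definition cond_iv {X : Banach} (T : operator X) : Prop :=
  convex (closure (domain T)).

From Stdlib Require Import Reals Lra Lia List Classical ClassicalEpsilon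
  FunctionalExtensionality PropExtensionality.
From mathcomp Require classical_sets.
Set Bullet Behavior "Strict Subproofs".
Open Scope R_scope.

(* The central object is the set of points x at which the pairing
   <zs, x - z>, (z,zs) in G(T), is bounded above.  It is convex, contains D_T
   (monotonicity plus boundedness of D_T) and lies in pi1 dom phi_T (take
   xs = 0).  This yields (ii) -> (iii) and the contrapositive of
   (ii) -> (i); (iii) -> (ii) and (iii) -> (iv) are immediate, and
   (i) -> (ii) is a direct estimate.

   For (iv) -> (ii) under maximality, a point x in pi1 dom phi_T outside
   the closed convex set cl D_T is strictly separated from it by some w in
   X^*; tilting the Fitzpatrick witness xs to xs + lam w makes (x, xs + lam w)
   monotonically related to G(T), so maximality puts x in D_T.  The
   separation is derived from a Hahn-Banach theorem (proved here by Zorn's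
   lemma on dominated linear graphs) applied to the distance to a convex cone. *)

Lemma vadd_0r (X : Banach) (x : X) : vadd X x (vzero X) = x.
Proof. rewrite vadd_comm; apply vadd_0l. Qed.

Lemma vadd_cancel (X : Banach) (a b c : X) : vadd X a b = vadd X a c -> b = c.
Proof.
  intros H.
  assert (E : forall y, y = vadd X (vopp X a) (vadd X a y)).
  { intros y. rewrite vadd_assoc, (vadd_comm X (vopp X a) a), vadd_oppr, vadd_0l.
    reflexivity. }
  rewrite (E b), (E c), H; reflexivity.
Qed.

Lemma vscal_0l (X : Banach) (x : X) : vscal X 0 x = vzero X.
Proof.
  apply (vadd_cancel X (vscal X 0 x)).
  rewrite vadd_0r, <- (vscal_addl X 0 0 x), Rplus_0_l. reflexivity.
Qed.

Lemma vscal_0r (X : Banach) (a : R) : vscal X a (vzero X) = vzero X.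
Proof.
  apply (vadd_cancel X (vscal X a (vzero X))).
  rewrite vadd_0r, <- (vscal_addr X a (vzero X) (vzero X)), vadd_0l. reflexivity.
Qed.

Lemma vopp_scal (X : Banach) (x : X) : vopp X x = vscal X (-1) x.
Proof.
  apply (vadd_cancel X x). rewrite vadd_oppr.
  rewrite <- (vscal_1 X x) at 1. rewrite <- vscal_addl.
  replace (1 + -1) with 0 by ring. now rewrite vscal_0l.
Qed.

Lemma vadd_swap4 (X : Banach) (a b c d : X) :
  vadd X (vadd X a b) (vadd X c d) = vadd X (vadd X a c) (vadd X b d).
Proof.
  rewrite !vadd_assoc. f_equal. rewrite <- !vadd_assoc. f_equal. apply vadd_comm.
Qed.

(* Reflexive normalisation of vector expressions: an expression over a list
   of atoms denotes the linear combination of the atoms given by its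
   coefficient function, so two expressions with equal coefficients (an
   identity in the field R) denote the same vector. *)

Inductive vexp :=
  VAt (n : nat) | V0 | VAdd (a b : vexp) | VOpp (a : vexp) | VScal (r : R) (a : vexp).

Fixpoint den {X : Banach} (env : list X) (e : vexp) : X :=
  match e with
  | VAt n => nth n env (vzero X)
  | V0 => vzero X
  | VAdd a b => vadd X (den env a) (den env b)
  | VOpp a => vopp X (den env a)
  | VScal r a => vscal X r (den env a)
  end.

Fixpoint coef (e : vexp) (i : nat) : R :=
  match e with
  | VAt n => if Nat.eqb n i then 1 else 0
  | V0 => 0
  | VAdd a b => coef a i + coef b i
  | VOpp a => - coef a i
  | VScal r a => r * coef a i
  end.

Fixpoint lin {X : Banach} (env : list X) (c : nat -> R) (k : nat) : X :=
  match env with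
  | nil => vzero X
  | x :: l => vadd X (vscal X (c k) x) (lin l c (S k))
  end.

Lemma lin_add (X : Banach) (env : list X) : forall c d k,
  lin env (fun i => c i + d i) k = vadd X (lin env c k) (lin env d k).
Proof.
  induction env as [|x l IH]; intros c d k; simpl.
  - now rewrite vadd_0l.
  - rewrite IH, vscal_addl. apply vadd_swap4.
Qed.

Lemma lin_scal (X : Banach) (env : list X) : forall r c k,
  lin env (fun i => r * c i) k = vscal X r (lin env c k).
Proof.
  induction env as [|x l IH]; intros r c k; simpl.
  - now rewrite vscal_0r.
  - rewrite IH, vscal_addr, vscal_assoc. reflexivity.
Qed.

Lemma lin_zero (X : Banach) (env : list X) : forall k,
  lin env (fun _ => 0) k = vzero X.
Proof.
  induction env as [|x l IH]; intros k; simpl; auto.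
  rewrite IH, vscal_0l, vadd_0l; auto.
Qed.

Lemma lin_at (X : Banach) (env : list X) : forall n k,
  lin env (fun i => if Nat.eqb n i then 1 else 0) k =
  if Nat.leb k n then nth (n - k) env (vzero X) else vzero X.
Proof.
  induction env as [|x l IH]; intros n k; simpl.
  - destruct (Nat.leb k n); auto. destruct (n - k)%nat; auto.
  - rewrite IH. destruct (Nat.eqb_spec n k) as [->|Hne].
    + rewrite vscal_1, Nat.leb_refl, Nat.sub_diag.
      replace (Nat.leb (S k) k) with false by (symmetry; apply Nat.leb_gt; lia).
      apply vadd_0r.
    + rewrite vscal_0l, vadd_0l.
      destruct (Nat.leb_spec (S k) n); destruct (Nat.leb_spec k n); try lia; auto.
      replace (n - k)%nat with (S (n - S k)) by lia. reflexivity.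
Qed.

(* Pointwise equal coefficients give equal combinations; stated on the list
   of indices actually used so that [simpl] produces finitely many goals. *)
Fixpoint allc (f : nat -> Prop) (l : list nat) : Prop :=
  match l with nil => True | i :: l' => f i /\ allc f l' end.

Lemma lin_ext (X : Banach) (env : list X) : forall c d k,
  allc (fun i => c i = d i) (seq k (length env)) -> lin env c k = lin env d k.
Proof.
  induction env as [|x l IH]; intros c d k H; simpl in *; auto.
  destruct H as [H1 H2]. rewrite H1, (IH c d); auto.
Qed.

Lemma den_lin (X : Banach) (env : list X) (e : vexp) :
  den env e = lin env (coef e) 0.
Proof.
  induction e; simpl.
  - rewrite lin_at. simpl. now rewrite Nat.sub_0_r.
  - symmetry; apply lin_zero.
  - rewrite IHe1, IHe2, <- lin_add. reflexivity.
  - rewrite IHe, vopp_scal, <- lin_scal. apply lin_ext.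
    generalize (seq 0 (length env)). induction l; simpl; auto. split; auto. ring.
  - rewrite IHe, <- lin_scal. reflexivity.
Qed.

Lemma den_eq (X : Banach) (env : list X) (e1 e2 : vexp) :
  allc (fun i => coef e1 i = coef e2 i) (seq 0 (length env)) ->
  den env e1 = den env e2.
Proof. intros H. rewrite !den_lin. apply lin_ext; auto. Qed.

Ltac lookup x l :=
  match l with
  | x :: _ => constr:(O)
  | _ :: ?l' => let n := lookup x l' in constr:(S n)
  end.
Ltac reify env t :=
  match t with
  | vzero _ => constr:(V0)
  | vadd _ ?a ?b => let ra := reify env a in let rb := reify env b in constr:(VAdd ra rb)
  | vopp _ ?a => let ra := reify env a in constr:(VOpp ra)
  | vscal _ ?r ?a => let ra := reify env a in constr:(VScal r ra)
  | vsub ?a ?b => let ra := reify env a in let rb := reify env b in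
                  constr:(VAdd ra (VOpp rb))
  | _ => let n := lookup t env in constr:(VAt n)
  end.
Ltac atoms t acc :=
  match t with
  | vzero _ => acc
  | vadd _ ?a ?b => let acc1 := atoms a acc in atoms b acc1
  | vopp _ ?a => atoms a acc
  | vscal _ _ ?a => atoms a acc
  | vsub ?a ?b => let acc1 := atoms a acc in atoms b acc1
  | _ => match acc with
         | context [t] => acc
         | _ => constr:(t :: acc)
         end
  end.

(* [vring] proves an equation between vector expressions whose coefficients
   agree as rational functions (side conditions on denominators by [lra]). *)
Ltac vring :=
  match goal with |- @eq ?T ?a ?b =>
    let env0 := atoms a (@nil T) in let env := atoms b env0 in
    let ra := reify env a in let rb := reify env b in
    change (den env ra = den env rb); apply den_eq; simpl;
    repeat split; first [ring | (field; lra) | field]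
  end.

Lemma sub_opp (X : Banach) (x y : X) : vsub x y = vopp X (vsub y x).
Proof. vring. Qed.

Lemma vnorm_0 (X : Banach) : vnorm X (vzero X) = 0.
Proof. rewrite <- (vscal_0l X (vzero X)), vnorm_scal, Rabs_R0. ring. Qed.

Lemma vnorm_opp (X : Banach) (x : X) : vnorm X (vopp X x) = vnorm X x.
Proof.
  rewrite vopp_scal, vnorm_scal.
  replace (Rabs (-1)) with 1 by (unfold Rabs; destruct Rcase_abs; lra). ring.
Qed.

Lemma vnorm_sub_diag (X : Banach) (x : X) : vnorm X (vsub x x) = 0.
Proof. unfold vsub. rewrite vadd_oppr. apply vnorm_0. Qed.

Lemma vnorm_sub_tri (X : Banach) (x y z : X) :
  vnorm X (vsub x z) <= vnorm X (vsub x y) + vnorm X (vsub y z).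
Proof.
  replace (vsub x z) with (vadd X (vsub x y) (vsub y z)) by vring.
  apply vnorm_triangle.
Qed.

Lemma vnorm_sub_le (X : Banach) (x y : X) : vnorm X (vsub x y) <= vnorm X x + vnorm X y.
Proof. unfold vsub. rewrite <- (vnorm_opp X y). apply vnorm_triangle. Qed.

Lemma dual_opp (X : Banach) (f : dual X) (x : X) : f (vopp X x) = - f x.
Proof. rewrite vopp_scal, dfun_scal. ring. Qed.

Lemma dual_bound (X : Banach) (f : dual X) :
  exists C, 0 <= C /\ forall x, Rabs (f x) <= C * vnorm X x.
Proof.
  destruct (dfun_bounded f) as [C HC]. exists (Rabs C). split; [apply Rabs_pos|].
  intros x. eapply Rle_trans; [apply HC|].
  apply Rmult_le_compat_r; [apply vnorm_ge0 | apply RRle_abs].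
Qed.

Definition zero_dual (X : Banach) : dual X.
Proof.
  refine {| dfun := fun _ => 0 |}.
  - intros; ring.
  - intros; ring.
  - exists 0. intros x. rewrite Rabs_R0. lra.
Defined.

Definition dual_comb (X : Banach) (f g : dual X) (l : R) : dual X.
Proof.
  refine {| dfun := fun v => f v + l * g v |}.
  - intros. rewrite !dfun_add. ring.
  - intros. rewrite !dfun_scal. ring.
  - destruct (dual_bound X f) as [C1 [H1 H1']], (dual_bound X g) as [C2 [H2 H2']].
    exists (C1 + Rabs l * C2). intros x.
    eapply Rle_trans; [apply Rabs_triang|]. rewrite Rabs_mult.
    specialize (H1' x). specialize (H2' x).
    assert (0 <= Rabs l) by apply Rabs_pos.
    assert (Rabs l * Rabs (g x) <= Rabs l * (C2 * vnorm X x))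
      by (apply Rmult_le_compat_l; auto).
    lra.
Defined.

Lemma closure_incl (X : Banach) (A : X -> Prop) (x : X) : A x -> closure A x.
Proof. intros H eps Heps. exists x. split; auto. rewrite vnorm_sub_diag; lra. Qed.

Lemma closure_mono (X : Banach) (A B : X -> Prop) :
  (forall x, A x -> B x) -> forall x, closure A x -> closure B x.
Proof. intros H x Hx eps He. destruct (Hx eps He) as [y [Hy Hn]]. eauto. Qed.

Lemma closure_idem (X : Banach) (A : X -> Prop) (x : X) :
  closure (closure A) x -> closure A x.
Proof.
  intros H eps He. destruct (H (eps/2)) as [y [Hy Hn]]; [lra|].
  destruct (Hy (eps/2)) as [z [Hz Hn2]]; [lra|].
  exists z. split; auto. pose proof (vnorm_sub_tri X x y z). lra.
Qed.

Lemma not_closure_dist (X : Banach) (A : X -> Prop) (x : X) : ~ closure A x ->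
  exists r, 0 < r /\ forall y, closure A y -> r <= vnorm X (vsub x y).
Proof.
  intros H.
  assert (Hr : exists r, 0 < r /\ forall y, A y -> r <= vnorm X (vsub x y)).
  { apply NNPP. intros H2. apply H. intros eps He.
    apply NNPP. intros H3. apply H2. exists eps. split; auto.
    intros y Hy. apply Rnot_lt_le. intros Hlt. apply H3. eauto. }
  destruct Hr as [r [Hr Hy]]. exists (r/2). split; [lra|].
  intros y Hc. destruct (Hc (r/2)) as [z [Hz Hn]]; [lra|].
  pose proof (Hy z Hz). pose proof (vnorm_sub_tri X x y z). lra.
Qed.

Lemma convex_closure (X : Banach) (A : X -> Prop) : convex A -> convex (closure A).
Proof.
  intros HA x y t Hx Hy Ht eps He.
  destruct (Hx (eps/2)) as [x' [Hx' Hnx]]; [lra|].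
  destruct (Hy (eps/2)) as [y' [Hy' Hny]]; [lra|].
  exists (vadd X (vscal X t x') (vscal X (1 - t) y')). split; [apply HA; auto|].
  replace (vsub (vadd X (vscal X t x) (vscal X (1 - t) y))
                (vadd X (vscal X t x') (vscal X (1 - t) y')))
    with (vadd X (vscal X t (vsub x x')) (vscal X (1 - t) (vsub y y'))) by vring.
  eapply Rle_lt_trans; [apply vnorm_triangle|].
  rewrite !vnorm_scal, (Rabs_right t), (Rabs_right (1 - t)) by lra.
  assert (t * vnorm X (vsub x x') <= t * (eps/2)) by (apply Rmult_le_compat_l; lra).
  assert ((1 - t) * vnorm X (vsub y y') <= (1 - t) * (eps/2))
    by (apply Rmult_le_compat_l; lra).
  lra.
Qed.

Lemma convex_co (X : Banach) (A : X -> Prop) : convex (co A).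
Proof. intros x y t Hx Hy Ht C HC HAC. apply HC; [apply Hx | apply Hy |]; auto. Qed.

Lemma incl_co (X : Banach) (A : X -> Prop) (x : X) : A x -> co A x.
Proof. intros H C HC HAC; auto. Qed.

Lemma zorn_union (T : Type) (P : (T -> Prop) -> Prop) :
  (forall F : (T -> Prop) -> Prop, (forall A, F A -> P A) ->
     (forall A B, F A -> F B -> (forall x, A x -> B x) \/ (forall x, B x -> A x)) ->
     P (fun x => exists A, F A /\ A x)) ->
  exists A, P A /\
    forall B, (forall x, A x -> B x) -> (exists x, B x /\ ~ A x) -> ~ P B.
Proof.
  intros H.
  destruct (@classical_sets.Zorn_bigcup T P) as [A [HA Hmax]].
  - intros F HF Htot.
    assert (E : classical_sets.bigcup F (fun X => X) = (fun x => exists A, F A /\ A x)).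
    { unfold classical_sets.bigcup, classical_sets.mkset.
      apply functional_extensionality. intros x. apply propositional_extensionality.
      split; [intros [i Hi Hx]; eauto | intros [i [Hi Hx]]; econstructor; eauto]. }
    rewrite E. apply H; [exact HF|]. intros A B HA HB. exact (Htot A B HA HB).
  - exists A. split; auto. intros B HAB [x [HBx HAx]] HB.
    apply (Hmax B); auto. split; [exact HAB|]. intros Hs. apply HAx, Hs, HBx.
Qed.

(* Linear maps are handled through their graphs: a maximal linear graph
   dominated by p through (y0, p y0) is total, and hence is the graph of F. *)
Section HahnBanach.
Variables (X : Banach) (p : X -> R).
Hypothesis p_subadd : forall v w, p (vadd X v w) <= p v + p w.
Hypothesis p_poshom : forall l v, 0 < l -> p (vscal X l v) = l * p v.

Lemma sublinear_zero : p (vzero X) = 0.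
Proof. pose proof (p_poshom 2 (vzero X)) as H. rewrite vscal_0r in H. lra. Qed.

(* Subadditivity gives p(ty) >= t p(y) also for negative t. *)
Lemma sublinear_scal_lower (t : R) (y : X) : t * p y <= p (vscal X t y).
Proof.
  destruct (Rtotal_order t 0) as [Hn|[H0|Hp]].
  - pose proof (p_subadd (vscal X t y) (vscal X (-t) y)) as H.
    replace (vadd X (vscal X t y) (vscal X (-t) y)) with (vzero X) in H by vring.
    rewrite (p_poshom (-t)), sublinear_zero in H by lra. lra.
  - subst. rewrite vscal_0l, sublinear_zero. lra.
  - rewrite p_poshom by lra. lra.
Qed.

Record dominated_graph (G : X * R -> Prop) : Prop := {
  graph_add : forall v a w b, G (v, a) -> G (w, b) -> G (vadd X v w, a + b);
  graph_scal : forall l v a, G (v, a) -> G (vscal X l v, l * a);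
  graph_le : forall v a, G (v, a) -> a <= p v }.

Lemma graph_zero (G : X * R -> Prop) (v : X) (a : R) :
  dominated_graph G -> G (v, a) -> G (vzero X, 0).
Proof.
  intros [_ Gscal _] H. pose proof (Gscal 0 v a H) as H0.
  rewrite vscal_0l, Rmult_0_l in H0. exact H0.
Qed.

Lemma graph_functional (G : X * R -> Prop) (v : X) (a b : R) :
  dominated_graph G -> G (v, a) -> G (v, b) -> a = b.
Proof.
  intros [Gadd Gscal Gle] Ha Hb.
  assert (H0 : G (vzero X, a + -1 * b)).
  { replace (vzero X) with (vadd X v (vscal X (-1) v)) by vring. apply Gadd; auto. }
  pose proof (Gle _ _ H0). pose proof (Gle _ _ (Gscal (-1) _ _ H0)).
  rewrite vscal_0r, sublinear_zero in *. lra.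
Qed.

Definition line_graph (y0 : X) : X * R -> Prop :=
  fun u => exists t, u = (vscal X t y0, t * p y0).

Lemma line_graph_dominated (y0 : X) : dominated_graph (line_graph y0).
Proof.
  split.
  - intros v a w b [t Ht] [t' Ht']. injection Ht as -> ->. injection Ht' as -> ->.
    exists (t + t'). rewrite vscal_addl. f_equal; ring.
  - intros l v a [t Ht]. injection Ht as -> ->.
    exists (l * t). rewrite vscal_assoc. f_equal; ring.
  - intros v a [t Ht]. injection Ht as -> ->. apply sublinear_scal_lower.
Qed.

(* The one-dimensional extension step: a value c for the new direction v1
   must satisfy b - p(w - v1) <= c <= p(w + v1) - b on G; such c exists
   because every lower bound is below every upper bound. *)
Lemma extension_value (G : X * R -> Prop) (v1 : X) :
  dominated_graph G -> G (vzero X, 0) ->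
  exists c, (forall w b, G (w, b) -> b - p (vsub w v1) <= c) /\
            (forall w b, G (w, b) -> c <= p (vadd X w v1) - b).
Proof.
  intros [Gadd _ Gle] G0.
  assert (key : forall w b w' b', G (w, b) -> G (w', b') ->
                  b' - p (vsub w' v1) <= p (vadd X w v1) - b).
  { intros w b w' b' H H'. pose proof (Gle _ _ (Gadd _ _ _ _ H H')).
    pose proof (p_subadd (vadd X w v1) (vsub w' v1)) as Hs.
    replace (vadd X (vadd X w v1) (vsub w' v1)) with (vadd X w w') in Hs by vring.
    lra. }
  set (E := fun s => exists w b, G (w, b) /\ s = b - p (vsub w v1)).
  destruct (completeness E) as [c [Hub Hlub]].
  - exists (p (vadd X (vzero X) v1) - 0). intros s [w [b [H ->]]]. apply key; auto.
  - exists (0 - p (vsub (vzero X) v1)), (vzero X), 0. auto.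
  - exists c. split.
    + intros w b H. apply Hub. exists w, b. auto.
    + intros w b H. apply Hlub. intros s [w' [b' [H' ->]]]. apply key; auto.
Qed.

Definition extend_graph (G : X * R -> Prop) (v1 : X) (c : R) : X * R -> Prop :=
  fun u => exists w b t, G (w, b) /\ u = (vadd X w (vscal X t v1), b + t * c).

(* With c as in [extension_value], the extended graph stays below p:
   rescale by |t| and use the lower (t < 0) or upper (t > 0) bound on c. *)
Lemma extend_graph_le (G : X * R -> Prop) (v1 : X) (c : R) :
  dominated_graph G ->
  (forall w b, G (w, b) -> b - p (vsub w v1) <= c) ->
  (forall w b, G (w, b) -> c <= p (vadd X w v1) - b) ->
  forall w b t, G (w, b) -> b + t * c <= p (vadd X w (vscal X t v1)).
Proof.
  intros [_ Gscal Gle] Hlow Hup w b t H.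
  destruct (Rtotal_order t 0) as [Hneg|[H0|Hpos]].
  - set (s := - t). assert (Hs : 0 < s) by (unfold s; lra).
    pose proof (Hlow _ _ (Gscal (1/s) _ _ H)) as Hg.
    replace (vadd X w (vscal X t v1)) with (vscal X s (vsub (vscal X (1/s) w) v1))
      by (unfold s; vring).
    rewrite p_poshom by lra.
    assert (s * (1 / s * b - p (vsub (vscal X (1 / s) w) v1)) <= s * c)
      by (apply Rmult_le_compat_l; lra).
    assert (s * (1 / s * b) = b) by (field; lra).
    unfold s in *. lra.
  - subst. rewrite vscal_0l, vadd_0r, Rmult_0_l, Rplus_0_r. auto.
  - pose proof (Hup _ _ (Gscal (1/t) _ _ H)) as Hg.
    replace (vadd X w (vscal X t v1)) with (vscal X t (vadd X (vscal X (1/t) w) v1))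
      by vring.
    rewrite p_poshom by lra.
    assert (t * c <= t * (p (vadd X (vscal X (1 / t) w) v1) - 1 / t * b))
      by (apply Rmult_le_compat_l; lra).
    assert (t * (1 / t * b) = b) by (field; lra).
    lra.
Qed.

Lemma extend_graph_dominated (G : X * R -> Prop) (v1 : X) :
  dominated_graph G -> G (vzero X, 0) ->
  exists c, dominated_graph (extend_graph G v1 c).
Proof.
  intros HG G0. destruct (extension_value G v1 HG G0) as [c [Hlow Hup]].
  exists c. pose proof HG as [Gadd Gscal Gle]. split.
  - intros v a w b [w1 [b1 [t1 [H1 E1]]]] [w2 [b2 [t2 [H2 E2]]]].
    injection E1 as -> ->. injection E2 as -> ->.
    exists (vadd X w1 w2), (b1 + b2), (t1 + t2). split; [apply Gadd; auto|].
    f_equal; [vring | ring].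
  - intros l v a [w1 [b1 [t1 [H1 E1]]]]. injection E1 as -> ->.
    exists (vscal X l w1), (l * b1), (l * t1). split; [apply Gscal; auto|].
    f_equal; [vring | ring].
  - intros v a [w [b [t [H E1]]]]. injection E1 as -> ->.
    apply (extend_graph_le G v1 c HG); auto.
Qed.

(* Zorn's lemma yields a total dominated linear graph through (y0, p y0).
   The admissibility condition is vacuous on the empty graph, so that the
   union of the empty chain is admissible too. *)
Lemma total_dominated_graph (y0 : X) :
  exists A, dominated_graph A /\ A (y0, p y0) /\ forall v, exists a, A (v, a).
Proof.
  set (P := fun G => dominated_graph G /\ (forall u, G u -> G (y0, p y0))).
  destruct (zorn_union (X * R) P) as [A [[HA HAy0] Hmax]].
  { intros F HF Htot. split; [split|].
    - intros v a w b [A1 [F1 H1]] [A2 [F2 H2]].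
      destruct (Htot A1 A2 F1 F2) as [S|S].
      + exists A2. split; auto. apply (graph_add _ (proj1 (HF A2 F2))); auto.
      + exists A1. split; auto. apply (graph_add _ (proj1 (HF A1 F1))); auto.
    - intros l v a [A1 [F1 H1]]. exists A1. split; auto.
      apply (graph_scal _ (proj1 (HF A1 F1))); auto.
    - intros v a [A1 [F1 H1]]. exact (graph_le _ (proj1 (HF A1 F1)) v a H1).
    - intros u [A1 [F1 H1]]. exists A1. split; auto. apply (proj2 (HF A1 F1) u); auto. }
  assert (Hy0 : A (y0, p y0)).
  { apply NNPP; intro Hn.
    apply (Hmax (line_graph y0)).
    - intros u Hu. exfalso; apply Hn; exact (HAy0 u Hu).
    - exists (y0, p y0). split; auto. exists 1. rewrite vscal_1. f_equal; ring.
    - split; [apply line_graph_dominated|].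
      intros u _. exists 1. rewrite vscal_1. f_equal; ring. }
  assert (H0 : A (vzero X, 0)) by exact (graph_zero A y0 (p y0) HA Hy0).
  exists A. split; [exact HA|]. split; [exact Hy0|].
  intros v1. apply NNPP; intro Hn.
  destruct (extend_graph_dominated A v1 HA H0) as [c Hc].
  apply (Hmax (extend_graph A v1 c)).
  - intros [w b] H. exists w, b, 0. split; auto. f_equal; [vring | ring].
  - exists (v1, c). split.
    + exists (vzero X), 0, 1. split; auto. f_equal; [vring | ring].
    + intro H. apply Hn. eauto.
  - split; [exact Hc|]. intros u _. exists y0, (p y0), 0. split; auto.
    f_equal; [vring | ring].
Qed.

Hypothesis p_bounded : exists K, forall v, p v <= K * vnorm X v.

(* A total dominated linear graph is the graph of a continuous functional:
   -F v = F(-v) <= p(-v) gives the two-sided norm bound. *)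
Lemma graph_dual (A : X * R -> Prop) :
  dominated_graph A -> (forall v, exists a, A (v, a)) ->
  exists F : dual X, forall v, A (v, F v).
Proof.
  intros HA Htot.
  set (fv := fun v => proj1_sig (constructive_indefinite_description _ (Htot v))).
  assert (HF : forall v, A (v, fv v)).
  { intros v. unfold fv. destruct (constructive_indefinite_description _ (Htot v)); auto. }
  assert (Hadd : forall x y, fv (vadd X x y) = fv x + fv y).
  { intros x y. apply (graph_functional A (vadd X x y)); auto.
    apply (graph_add _ HA); auto. }
  assert (Hscal : forall l x, fv (vscal X l x) = l * fv x).
  { intros l x. apply (graph_functional A (vscal X l x)); auto.
    apply (graph_scal _ HA); auto. }
  assert (Hbnd : exists C, forall x, Rabs (fv x) <= C * vnorm X x).
  { destruct p_bounded as [K HK]. exists K. intros x.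
    pose proof (graph_le _ HA _ _ (HF x)). pose proof (HK x).
    pose proof (graph_le _ HA _ _ (HF (vscal X (-1) x))) as Hm.
    rewrite Hscal, <- vopp_scal in Hm. pose proof (HK (vopp X x)) as HKm.
    rewrite vnorm_opp in HKm.
    unfold Rabs; destruct Rcase_abs; lra. }
  exists {| dfun := fv; dfun_add := Hadd; dfun_scal := Hscal; dfun_bounded := Hbnd |}.
  exact HF.
Qed.

Theorem hahn_banach (y0 : X) :
  exists F : dual X, (forall v, F v <= p v) /\ F y0 = p y0.
Proof.
  destruct (total_dominated_graph y0) as [A [HA [Hy0 Htot]]].
  destruct (graph_dual A HA Htot) as [F HF].
  exists F. split.
  - intros v. apply (graph_le _ HA); auto.
  - apply (graph_functional A y0); auto.
Qed.

End HahnBanach.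

(* The distance to a convex cone Q is a sublinear functional bounded by the
   norm; it is the gauge to which Hahn-Banach is applied for separation. *)
Section ConeDistance.
Variables (X : Banach) (Q : X -> Prop).
Hypothesis Q_zero : Q (vzero X).
Hypothesis Q_add : forall q1 q2, Q q1 -> Q q2 -> Q (vadd X q1 q2).
Hypothesis Q_scal : forall l q, 0 <= l -> Q q -> Q (vscal X l q).

Definition neg_dists (v : X) : R -> Prop :=
  fun a => exists q, Q q /\ a = - vnorm X (vsub v q).

Lemma neg_dists_bound (v : X) : bound (neg_dists v).
Proof.
  exists 0. intros a [q [_ ->]]. pose proof (vnorm_ge0 X (vsub v q)). lra.
Qed.

Lemma neg_dists_inhabited (v : X) : exists a, neg_dists v a.
Proof. exists (- vnorm X (vsub v (vzero X))). exists (vzero X). auto. Qed.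

(* cone_dist v = inf { ||v - q|| : q in Q } *)
Definition cone_dist (v : X) : R :=
  - proj1_sig (completeness _ (neg_dists_bound v) (neg_dists_inhabited v)).

Lemma cone_dist_le (v q : X) : Q q -> cone_dist v <= vnorm X (vsub v q).
Proof.
  intros Hq. unfold cone_dist.
  destruct (proj2_sig (completeness _ (neg_dists_bound v) (neg_dists_inhabited v)))
    as [Hub _].
  assert (- vnorm X (vsub v q) <= proj1_sig (completeness _ (neg_dists_bound v)
                                                (neg_dists_inhabited v)))
    by (apply Hub; exists q; auto).
  lra.
Qed.

Lemma cone_dist_ge (v : X) (b : R) :
  (forall q, Q q -> b <= vnorm X (vsub v q)) -> b <= cone_dist v.
Proof.
  intros Hb. unfold cone_dist.
  destruct (proj2_sig (completeness _ (neg_dists_bound v) (neg_dists_inhabited v)))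
    as [_ Hlub].
  assert (proj1_sig (completeness _ (neg_dists_bound v) (neg_dists_inhabited v)) <= - b).
  { apply Hlub. intros a [q [Hq ->]]. pose proof (Hb q Hq). lra. }
  lra.
Qed.

Lemma cone_dist_subadd (v w : X) : cone_dist (vadd X v w) <= cone_dist v + cone_dist w.
Proof.
  assert (H1 : forall q1 q2, Q q1 -> Q q2 ->
            cone_dist (vadd X v w) <= vnorm X (vsub v q1) + vnorm X (vsub w q2)).
  { intros q1 q2 Hq1 Hq2.
    eapply Rle_trans; [apply (cone_dist_le _ (vadd X q1 q2)); auto|].
    replace (vsub (vadd X v w) (vadd X q1 q2))
      with (vadd X (vsub v q1) (vsub w q2)) by vring.
    apply vnorm_triangle. }
  assert (H2 : forall q2, Q q2 ->
            cone_dist (vadd X v w) - vnorm X (vsub w q2) <= cone_dist v).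
  { intros q2 Hq2. apply cone_dist_ge. intros q1 Hq1. pose proof (H1 q1 q2 Hq1 Hq2). lra. }
  assert (cone_dist (vadd X v w) - cone_dist v <= cone_dist w).
  { apply cone_dist_ge. intros q2 Hq2. pose proof (H2 q2 Hq2). lra. }
  lra.
Qed.

(* Positive homogeneity: q |-> l q is a bijection of Q for l > 0. *)
Lemma cone_dist_poshom (l : R) (v : X) :
  0 < l -> cone_dist (vscal X l v) = l * cone_dist v.
Proof.
  intros Hl. apply Rle_antisym.
  - assert (cone_dist (vscal X l v) / l <= cone_dist v).
    { apply cone_dist_ge. intros q Hq.
      pose proof (cone_dist_le (vscal X l v) (vscal X l q) (Q_scal l q ltac:(lra) Hq)) as H.
      replace (vsub (vscal X l v) (vscal X l q)) with (vscal X l (vsub v q)) in H by vring.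
      rewrite vnorm_scal, Rabs_right in H by lra.
      apply (Rmult_le_reg_l l); [lra|].
      replace (l * (cone_dist (vscal X l v) / l)) with (cone_dist (vscal X l v))
        by (field; lra).
      lra. }
    replace (cone_dist (vscal X l v)) with (l * (cone_dist (vscal X l v) / l))
      by (field; lra).
    apply Rmult_le_compat_l; lra.
  - apply cone_dist_ge. intros q Hq.
    assert (Hl' : 0 <= 1 / l) by (apply Rlt_le, Rdiv_lt_0_compat; lra).
    pose proof (cone_dist_le v (vscal X (1/l) q) (Q_scal (1/l) q Hl' Hq)) as H.
    replace (vsub v (vscal X (1 / l) q)) with (vscal X (1/l) (vsub (vscal X l v) q))
      in H by vring.
    rewrite vnorm_scal, Rabs_right in H by lra.
    apply (Rmult_le_compat_l l) in H; [|lra].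
    replace (l * (1 / l * vnorm X (vsub (vscal X l v) q)))
      with (vnorm X (vsub (vscal X l v) q)) in H by (field; lra).
    lra.
Qed.

Lemma cone_dist_le_norm (v : X) : cone_dist v <= 1 * vnorm X v.
Proof.
  pose proof (cone_dist_le v (vzero X) Q_zero) as H.
  replace (vsub v (vzero X)) with v in H by vring. lra.
Qed.

End ConeDistance.

Lemma div_unit_interval (a b : R) : 0 <= a -> 0 < b -> a <= b -> 0 <= a / b <= 1.
Proof.
  intros Ha Hb Hab. unfold Rdiv.
  assert (0 < / b) by (apply Rinv_0_lt_compat; lra).
  assert (b * / b = 1) by (field; lra). split; nra.
Qed.

Definition cone_from {X : Banach} (C : X -> Prop) (x : X) : X -> Prop :=
  fun v => exists mu c, 0 <= mu /\ C c /\ v = vscal X mu (vsub c x).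

Lemma cone_from_zero (X : Banach) (C : X -> Prop) (x c0 : X) :
  C c0 -> cone_from C x (vzero X).
Proof. intros Hc0. exists 0, c0. split; [lra|]. split; auto. rewrite vscal_0l; auto. Qed.

(* mu (c - x) + nu (c' - x) = (mu + nu) (c'' - x) with c'' a convex
   combination of c and c'. *)
Lemma cone_from_add (X : Banach) (C : X -> Prop) (x : X) : convex C ->
  forall q1 q2, cone_from C x q1 -> cone_from C x q2 -> cone_from C x (vadd X q1 q2).
Proof.
  intros HC q1 q2 [mu [c [Hmu [Hc ->]]]] [nu [c' [Hnu [Hc' ->]]]].
  destruct (Req_dec (mu + nu) 0) as [Hz|Hz].
  - assert (mu = 0) by lra. assert (nu = 0) by lra. subst.
    exists 0, c. split; [lra|]. split; auto. vring.
  - exists (mu + nu),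
      (vadd X (vscal X (mu / (mu + nu)) c) (vscal X (1 - mu / (mu + nu)) c')).
    split; [lra|]. split.
    + apply HC; auto. apply div_unit_interval; lra.
    + vring.
Qed.

Lemma cone_from_scal (X : Banach) (C : X -> Prop) (x : X) :
  forall l q, 0 <= l -> cone_from C x q -> cone_from C x (vscal X l q).
Proof.
  intros l q Hl [mu [c [Hmu [Hc ->]]]]. exists (l * mu), c.
  split; [nra|]. split; auto. apply vscal_assoc.
Qed.

(* Separation of a point x2 at distance >= rho > 0 from a convex set C:
   apply Hahn-Banach to the distance from the cone generated by C - x2. *)
Lemma separation (X : Banach) (C : X -> Prop) (x2 c0 : X) (rho : R)
  (HC : convex C) (Hc0 : C c0) (Hr : 0 < rho)
  (Hd : forall c, C c -> rho <= vnorm X (vsub x2 c)) :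
  exists F : dual X, (forall c, C c -> F (vsub c x2) <= 0) /\ 0 < F (vsub x2 c0).
Proof.
  set (Q := cone_from C x2).
  assert (Q0 : Q (vzero X)) by exact (cone_from_zero X C x2 c0 Hc0).
  set (p := cone_dist X Q Q0).
  destruct (hahn_banach X p (cone_dist_subadd X Q Q0 (cone_from_add X C x2 HC))
              (cone_dist_poshom X Q Q0 (cone_from_scal X C x2))
              (ex_intro _ 1 (cone_dist_le_norm X Q Q0)) (vsub x2 c0)) as [F [HF1 HF2]].
  exists F. split.
  - intros c Hc. eapply Rle_trans; [apply HF1|].
    pose proof (cone_dist_le X Q Q0 (vsub c x2) (vsub c x2)) as H.
    rewrite vnorm_sub_diag in H. apply H. exists 1, c. split; [lra|]. split; auto.
    symmetry; apply vscal_1.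
  - rewrite HF2. apply Rlt_le_trans with rho; auto. apply cone_dist_ge.
    intros q [mu [c [Hmu [Hc ->]]]].
    set (z := vadd X (vscal X (1 / (1 + mu)) c0) (vscal X (1 - 1 / (1 + mu)) c)).
    assert (Hz : C z) by (apply HC; auto; apply div_unit_interval; lra).
    replace (vsub (vsub x2 c0) (vscal X mu (vsub c x2))) with (vscal X (1 + mu) (vsub x2 z))
      by (unfold z; vring).
    rewrite vnorm_scal, Rabs_right by lra.
    pose proof (Hd z Hz). pose proof (vnorm_ge0 X (vsub x2 z)). nra.
Qed.

(* Strict separation with a uniform margin: shift x slightly towards C (to
   x2) and separate x2; the shift x - x2 then contributes a fixed positive
   amount to every value w (x - c). *)
Lemma strict_separation (X : Banach) (C : X -> Prop) (x : X) (r : R) :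
  convex C -> 0 < r -> (forall c, C c -> r <= vnorm X (vsub x c)) ->
  exists (w : dual X) (delta : R), 0 < delta /\ forall c, C c -> delta <= w (vsub x c).
Proof.
  intros HC Hr Hd.
  destruct (classic (exists c0, C c0)) as [[c0 Hc0]|Hempty].
  2: { exists (zero_dual X), 1. split; [lra|]. intros c Hc. exfalso; eauto. }
  set (n0 := vnorm X (vsub x c0)).
  assert (Hn0 : r <= n0) by exact (Hd c0 Hc0).
  set (s := r / (2 * n0)).
  assert (Hs : 0 < s) by (apply Rdiv_lt_0_compat; lra).
  assert (Hsn : s * n0 = r / 2) by (unfold s; field; lra).
  assert (Hs1 : s <= 1 / 2).
  { apply (Rmult_le_reg_r (2 * n0)); [lra|].
    replace (s * (2 * n0)) with r by (unfold s; field; lra). lra. }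
  set (x2 := vadd X x (vscal X s (vsub c0 x))).
  assert (E1 : vsub x x2 = vscal X s (vsub x c0)) by (unfold x2; vring).
  assert (E2 : vsub x2 c0 = vscal X (1 - s) (vsub x c0)) by (unfold x2; vring).
  assert (Hdist : forall c, C c -> r / 2 <= vnorm X (vsub x2 c)).
  { intros c Hc. pose proof (Hd c Hc). pose proof (vnorm_sub_tri X x x2 c) as Ht.
    rewrite E1, vnorm_scal, Rabs_right in Ht by lra. fold n0 in Ht. lra. }
  destruct (separation X C x2 c0 (r / 2) HC Hc0 ltac:(lra) Hdist) as [F [HF1 HF2]].
  rewrite E2, dfun_scal in HF2.
  assert (Hpos : 0 < F (vsub x c0)) by nra.
  exists F, (s * F (vsub x c0)). split; [nra|].
  intros c Hc.
  replace (vsub x c) with (vadd X (vsub x x2) (vsub x2 c)) by vring.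
  rewrite dfun_add, E1, dfun_scal, (sub_opp X x2 c), dual_opp.
  pose proof (HF1 c Hc). lra.
Qed.

(* The points x at which the pairings <zs, x - z>, (z,zs) in G(T), are
   bounded above; this is pi1 of dom phi_T restricted to xs = 0. *)
Definition bounded_pairing (X : Banach) (T : operator X) (x : X) : Prop :=
  exists K, forall z zs, T z zs -> zs (vsub x z) <= K.

Lemma bounded_pairing_fitzpatrick (X : Banach) (T : operator X) (x : X) :
  bounded_pairing X T x -> pi1_dom_fitzpatrick T x.
Proof.
  intros [K HK]. exists (zero_dual X), K. intros z zs Hz. simpl.
  specialize (HK z zs Hz). rewrite (sub_opp X z x), dual_opp. lra.
Qed.

(* For (x, xs) in G(T), monotonicity gives
   <zs, x - z> <= <xs, x - z> <= ||xs|| (sup ||D_T|| + ||x||). *)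
Lemma domain_bounded_pairing (X : Banach) (T : operator X) (x : X) :
  monotone T -> bounded_set (domain T) -> domain T x -> bounded_pairing X T x.
Proof.
  intros hmon [Mb HMb] [xs Hx]. destruct (dual_bound X xs) as [C [HC0 HC]].
  exists (C * (Mb + vnorm X x)). intros z zs Hz.
  pose proof (hmon z zs x xs Hz Hx) as Hm.
  rewrite (sub_opp X x z), dual_opp. specialize (HC (vsub z x)).
  pose proof (vnorm_sub_le X z x). pose proof (HMb z (ex_intro _ zs Hz)).
  assert (C * vnorm X (vsub z x) <= C * (Mb + vnorm X x))
    by (apply Rmult_le_compat_l; lra).
  pose proof (Rle_abs (- xs (vsub z x))) as Ha. rewrite Rabs_Ropp in Ha. lra.
Qed.

Lemma bounded_pairing_convex (X : Banach) (T : operator X) :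
  convex (bounded_pairing X T).
Proof.
  intros x y t [Kx Hx] [Ky Hy] Ht. exists (t * Kx + (1 - t) * Ky).
  intros z zs Hz.
  replace (vsub (vadd X (vscal X t x) (vscal X (1 - t) y)) z)
    with (vadd X (vscal X t (vsub x z)) (vscal X (1 - t) (vsub y z))) by vring.
  rewrite dfun_add, !dfun_scal.
  specialize (Hx z zs Hz). specialize (Hy z zs Hz).
  assert (t * zs (vsub x z) <= t * Kx) by (apply Rmult_le_compat_l; lra).
  assert ((1 - t) * zs (vsub y z) <= (1 - t) * Ky) by (apply Rmult_le_compat_l; lra).
  lra.
Qed.

Lemma maximal_monotone_related (X : Banach) (T : operator X) (x : X) (xs : dual X) :
  maximal_monotone T ->
  (forall z zs, T z zs -> 0 <= xs (vsub x z) - zs (vsub x z)) -> T x xs.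
Proof.
  intros [hmon hmax] Hrel.
  set (S := fun (a : X) (as_ : dual X) => T a as_ \/ (a = x /\ as_ = xs)).
  apply (hmax S).
  - intros a as_ b bs [Ha|[-> ->]] [Hb|[-> ->]].
    + apply hmon; auto.
    + rewrite (sub_opp X a x), !dual_opp. pose proof (Hrel a as_ Ha). lra.
    + apply Hrel; auto.
    + lra.
  - intros a as_ H. left; auto.
  - right; auto.
Qed.

Lemma fitzpatrick_tilt (X : Banach) (T : operator X) (x : X) (xs w : dual X) (delta : R) :
  dom_fitzpatrick T x xs -> 0 < delta ->
  (forall z, domain T z -> delta <= w (vsub x z)) ->
  exists lam, forall z zs, T z zs ->
    0 <= dual_comb X xs w lam (vsub x z) - zs (vsub x z).
Proof.
  intros [M HM] Hdel Hw.
  set (lam := Rmax 0 ((M - xs x) / delta)).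
  assert (Hl0 : 0 <= lam) by apply Rmax_l.
  assert (Hl1 : M - xs x <= lam * delta).
  { assert ((M - xs x) / delta <= lam) by apply Rmax_r.
    replace (M - xs x) with ((M - xs x) / delta * delta) by (field; lra).
    apply Rmult_le_compat_r; lra. }
  exists lam. intros z zs Hz. simpl.
  specialize (HM z zs Hz). rewrite (sub_opp X z x), !dual_opp in HM.
  pose proof (Hw z (ex_intro _ zs Hz)).
  assert (lam * delta <= lam * w (vsub x z)) by (apply Rmult_le_compat_l; lra).
  lra.
Qed.

(* If x lies outside cl D_T and phi_T(x, xs) <= M, then the ratios in (i)
   are at most |M - <xs, x>| / dist(x, D_T) + ||xs||. *)
Lemma cond_i_ii (X : Banach) (T : operator X) : cond_i T -> cond_ii T.
Proof.
  intros Hi x [xs [M HM]]. apply NNPP; intro Hc.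
  destruct (not_closure_dist X _ x Hc) as [r [Hr Hd]].
  destruct (dual_bound X xs) as [C [HC0 HC]].
  destruct (Hi x Hc (Rabs (M - xs x) / r + C)) as [z [zs [Hz Hlt]]].
  assert (Hn : r <= vnorm X (vsub x z))
    by (apply Hd, closure_incl; exists zs; exact Hz).
  specialize (HM z zs Hz). rewrite (sub_opp X z x), !dual_opp in HM.
  specialize (HC (vsub x z)).
  pose proof (RRle_abs (M - xs x)). pose proof (RRle_abs (xs (vsub x z))).
  set (n := vnorm X (vsub x z)) in *. set (K := Rabs (M - xs x)) in *.
  assert (Ha : zs (vsub x z) <= K + C * n) by lra.
  assert (HK : K / r * r = K) by (field; lra).
  assert (Hq : zs (vsub x z) / n * n = zs (vsub x z)) by (field; lra).
  assert (K / r * r <= K / r * n).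
  { apply Rmult_le_compat_l; [|lra].
    apply Rmult_le_pos; [apply Rabs_pos | left; apply Rinv_0_lt_compat; lra]. }
  nra.
Qed.

(* If the ratios in (i) are bounded by M at x outside cl D_T, then
   <zs, x - z> <= |M| (||x|| + sup ||D_T||), so x lies in pi1 dom phi_T. *)
Lemma cond_ii_i (X : Banach) (T : operator X) :
  bounded_set (domain T) -> cond_ii T -> cond_i T.
Proof.
  intros [Mb HMb] Hii x Hx M. apply NNPP; intro H. apply Hx, Hii.
  apply bounded_pairing_fitzpatrick.
  destruct (not_closure_dist X _ x Hx) as [r [Hr Hd]].
  exists (Rabs M * (vnorm X x + Mb)). intros z zs Hz.
  assert (Hn : r <= vnorm X (vsub x z))
    by (apply Hd, closure_incl; exists zs; exact Hz).
  assert (Hq : zs (vsub x z) / vnorm X (vsub x z) <= M).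
  { apply Rnot_lt_le. intro Hl. apply H. eauto. }
  assert (Hm : vnorm X (vsub x z) <= vnorm X x + Mb).
  { pose proof (vnorm_sub_le X x z). pose proof (HMb z (ex_intro _ zs Hz)). lra. }
  set (n := vnorm X (vsub x z)) in *.
  assert (E : zs (vsub x z) / n * n = zs (vsub x z)) by (field; lra).
  pose proof (RRle_abs M). pose proof (Rabs_pos M).
  nra.
Qed.

(* cl D_T <= cl co D_T <= cl bounded_pairing <= cl pi1 dom phi_T <= cl D_T,
   the last step by (ii). *)
Lemma cond_ii_iii (X : Banach) (T : operator X) :
  monotone T -> bounded_set (domain T) -> cond_ii T -> cond_iii T.
Proof.
  intros hmon hbd Hii.
  assert (H1 : forall x, closure (domain T) x -> closure (co (domain T)) x).
  { apply closure_mono. apply incl_co. }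
  assert (H2 : forall x, closure (co (domain T)) x -> closure (pi1_dom_fitzpatrick T) x).
  { apply closure_mono. intros x Hx. apply bounded_pairing_fitzpatrick.
    apply Hx; [apply bounded_pairing_convex|].
    intros y. apply domain_bounded_pairing; auto. }
  assert (H3 : forall x, closure (pi1_dom_fitzpatrick T) x -> closure (domain T) x).
  { intros x Hx. apply closure_idem. revert Hx. apply closure_mono. exact Hii. }
  split; intros x; split; auto.
Qed.

Lemma cond_iii_ii (X : Banach) (T : operator X) : cond_iii T -> cond_ii T.
Proof. intros [_ H] x Hx. apply H, closure_incl, Hx. Qed.

(* cl D_T = cl co D_T, and the closure of a convex set is convex. *)
Lemma cond_iii_iv (X : Banach) (T : operator X) : cond_iii T -> cond_iv T.
Proof.
  intros [H _] x y t Hx Hy Ht. apply H.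
  apply convex_closure; [apply convex_co | apply H; auto | apply H; auto | auto].
Qed.

(* A point of pi1 dom phi_T outside the closed convex set cl D_T is strictly
   separated from it; tilting its Fitzpatrick witness and using maximality
   puts it in D_T, a contradiction. *)
Lemma cond_iv_ii (X : Banach) (T : operator X) :
  maximal_monotone T -> cond_iv T -> cond_ii T.
Proof.
  intros hmax Hiv x [xs Hxs]. apply NNPP; intro Hc.
  destruct (not_closure_dist X _ x Hc) as [r [Hr Hd]].
  destruct (strict_separation X _ x r Hiv Hr Hd) as [w [delta [Hdel Hw]]].
  destruct (fitzpatrick_tilt X T x xs w delta Hxs Hdel) as [lam Hrel].
  { intros z Hz. apply Hw, closure_incl, Hz. }
  apply Hc, closure_incl. exists (dual_comb X xs w lam).
  apply maximal_monotone_related; auto.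
Qed.

Theorem theorem1p3 (X : Banach) (T : operator X)
  (hmon : monotone T) (hbd : bounded_set (domain T)) :
  (cond_i T <-> cond_ii T) /\ (cond_ii T <-> cond_iii T) /\
  (cond_i T -> cond_iv T) /\ (cond_ii T -> cond_iv T) /\ (cond_iii T -> cond_iv T) /\
  (maximal_monotone T ->
     (cond_i T <-> cond_iv T) /\ (cond_ii T <-> cond_iv T) /\ (cond_iii T <-> cond_iv T)).
Proof.
  pose proof (cond_i_ii X T) as i_ii.
  pose proof (cond_ii_i X T hbd) as ii_i.
  pose proof (cond_ii_iii X T hmon hbd) as ii_iii.
  pose proof (cond_iii_ii X T) as iii_ii.
  pose proof (cond_iii_iv X T) as iii_iv.
  pose proof (cond_iv_ii X T) as iv_ii.
  tauto.
Qed.
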